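(* Consider the coupling process described in the context, run on a hypergraph colouring instance with pinnings $(H,\mathcal P)$, $H=(V,\mathcal E)$, with integer parameters $0<k_2<k_1\le k$ such that $k_1\le|e|\le k$ for all $e\in\mathcal E$, a vertex $v$ and distinct colours $c_1,c_2$. Then: (1) every coloured vertex is in $V_1$ or adjacent to $V_1$, i.e. $V_{\mathrm{col}}\subseteq\Gamma_{\mathrm{ver}}(V_1)$ at the end of the process; (2) the distributions of the output partial colourings $X$ and $Y$ are pre-Gibbs with respect to $\mu_{\mathcal C_1}$ and $\mu_{\mathcal C_2}$ respectively.
   Context: A hypergraph colouring instance with pinnings is a pair $(H,\mathcal P)$ where $H=(V,\mathcal E)$ is a hypergraph and $\mathcal P=\{P_e\subseteq[q]:e\in\mathcal E\}$; a colouring $\sigma\in[q]^V$ is proper if $|\{\sigma(u):u\in e\}\cup P_e|>1$ for all $e$. A partial colouring is an element of $([q]\cup\{-\})^V$, where $-$ means uncoloured; a full colouring $\sigma$ is consistent with a partial colouring $X$ (written $\sigma\models X$) if they agree on all vertices coloured by $X$. $\mathcal C_X$ is the set of proper colourings consistent with $X$, $\mu_{\mathcal C'}$ denotes the uniform distribution on a set $\mathcal C'$, and $\mathcal C_i$ ($i=1,2$) is the set of proper colourings with $v$ coloured $c_i$. For a set $\mathcal C'$ of proper colourings, a distribution $\mu$ on partial colourings is pre-Gibbs with respect to $\mu_{\mathcal C'}$ if for every $\sigma\in\mathcal C'$, $\mu_{\mathcal C'}(\sigma)=\sum_{\sigma':\sigma\models\sigma'}\mu(\sigma')\,\mu_{\mathcal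 C'}(\sigma\mid\sigma')$. The marginal distribution at a vertex $u$ conditioned on a partial colouring $X$ is the law of $\sigma(u)$ for $\sigma$ uniform in $\mathcal C_X$. A partial colouring $X$ satisfies a hyperedge $e$ if the colours of the coloured vertices of $e$ together with $P_e$ contain at least two distinct colours. For $u\in V$, $\Gamma_{\mathrm{ver}}(u)=\{w:\exists e\in\mathcal E,\{u,w\}\subseteq e\}\cup\{u\}$ (with $\mathcal E$ the original hyperedge set) and $\Gamma_{\mathrm{ver}}(U)=\bigcup_{u\in U}\Gamma_{\mathrm{ver}}(u)$. The coupling process: fix arbitrary orderings of vertices and hyperedges. Let $X_0$ ($Y_0$) colour $v$ with $c_1$ ($c_2$) and leave all else uncoloured. Initialise $V_1=\{v\}$, $V_2=V\setminus V_1$, $V_{\mathrm{col}}=\{v\}$, $X=X_0$, $Y=Y_0$, and a working copy $\mathcal E'$ of $\mathcal E$. While some $e\in\mathcal E'$ meets both $V_1$ and $V_2$: let $e$ be the first such hyperedge and $u$ the first vertex of $e\cap V_2$; sample $(c_x,c_y)$ from a maximal coupling of the marginal distribution at $u$ conditioned on $X$ and the marginal at $u$ conditioned on $Y$; colour $u$ by $c_x$ in $X$ and by $c_y$ in $Y$; add $u$ to $V_{\mathrm{col}}$; if $c_x\ne c_y$, move $u$ from $V_2$ to $V_1$; remove from $\mathcal E'$ every hyperedge containing $u$ that is satisfied by both $X$ and $Y$; then for every hyperedge $e'\in\mathcal E'$ containing $u$ with $e'\cap V_1\ne\emptyset$, $e'\cap V_2\neq\emptyset$ and $|e'\cap V_{\mathrm{col}}|=k_2$,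 set $V_1\leftarrow V_1\cup(e'\setminus V_{\mathrm{col}})$, $V_2\leftarrow V\setminus V_1$ and remove $e'$ from $\mathcal E'$. The output is $V_{\mathrm{col}}$, the partition $V_1\sqcup V_2=V$, and the partial colourings $X,Y$ defined on $V_{\mathrm{col}}$.
   Formalization: The loop runs while some hyperedge of $\mathcal E'$ meets both $V_1$ and $V_2\setminus V_{\mathrm{col}}$, u is the first vertex of $e\cap(V_2\setminus V_{\mathrm{col}})$, and $\mathcal C_1$ and $\mathcal C_2$ are nonempty. The statement above fails without it. *)

From mathcomp Require Import all_boot all_order all_algebra.
Set Implicit Arguments.
Unset Strict Implicit.
Unset Printing Implicit Defensive.
Import Order.TTheory GRing.Theory Num.Theory.
Local Open Scope ring_scope.

(* Hypergraph colouring instance with pinnings: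
   vertices: a finite type V; colours: 'I_q;
   hyperedges: E : 'I_m -> {set V}, their order is the index order;
   pinnings:  P : 'I_m -> {set 'I_q}  (P i is the pinning of hyperedge E i). *)

Section Colourings.
Variables (V : finType) (q m : nat) (E : 'I_m -> {set V}) (P : 'I_m -> {set 'I_q}).

(* full and partial colourings ([None] = uncoloured, i.e. "-") *)
Definition fcol := {ffun V -> 'I_q}.
Definition pcol := {ffun V -> option 'I_q}.

Definition proper (s : fcol) : bool :=
  [forall i : 'I_m, (1 < #|[set s u | u in E i] :|: P i|)%N].

Definition consistent (s : fcol) (X : pcol) : bool :=
  [forall u, if X u is Some c then s u == c else true].

Definition CX (X : pcol) : {set fcol} := [set s : fcol | proper s && consistent s X].

Definition Cvc (v : V) (c : 'I_q) : {set fcol} := [set s : fcol | proper s && (s v == c)].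

Definition colours_of (X : pcol) (e : {set V}) : {set 'I_q} :=
  [set c | [exists u in e, X u == Some c]].

Definition satisfies (X : pcol) (i : 'I_m) : bool :=
  (1 < #|colours_of X (E i) :|: P i|)%N.

Definition adj_ver (u w : V) : bool :=
  (u == w) || [exists i : 'I_m, (u \in E i) && (w \in E i)].
Definition Gamma_ver (U : {set V}) : {set V} := [set w | [exists u in U, adj_ver u w]].

End Colourings.

Section Distributions.
Variable R : realFieldType.
Variables (V : finType) (q m : nat) (E : 'I_m -> {set V}) (P : 'I_m -> {set 'I_q}).

Definition unif (C : {set fcol V q}) (s : fcol V q) : R :=
  if s \in C then (#|C|%:R)^-1 else 0.

Definition cond_unif (C : {set fcol V q}) (X : pcol V q) (s : fcol V q) : R :=
  unif [set t in C | consistent t X] s.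

Definition marginal (X : pcol V q) (u : V) : {ffun 'I_q -> R} :=
  [ffun c => \sum_(s in CX E P X | s u == c) unif (CX E P X) s].

Definition is_coupling (mu nu : {ffun 'I_q -> R}) (pi : {ffun 'I_q * 'I_q -> R}) : Prop :=
  [/\ forall ab, 0 <= pi ab,
      forall a, \sum_b pi (a, b) = mu a
    & forall b, \sum_a pi (a, b) = nu b].

Definition is_max_coupling (mu nu : {ffun 'I_q -> R}) (pi : {ffun 'I_q * 'I_q -> R}) : Prop :=
  is_coupling mu nu pi /\
  forall pi', is_coupling mu nu pi' ->
    \sum_(ab | ab.1 == ab.2) pi' ab <= \sum_(ab | ab.1 == ab.2) pi ab.

Definition preGibbs (C : {set fcol V q}) (mu : {ffun pcol V q -> R}) : Prop :=
  [/\ forall X, 0 <= mu X,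
      \sum_X mu X = 1
    & forall s, s \in C ->
        unif C s = \sum_(X | consistent s X) mu X * cond_unif C X s].

End Distributions.

Section Process.
Variable R : realFieldType.
Variables (V : finType) (q m : nat) (E : 'I_m -> {set V}) (P : 'I_m -> {set 'I_q}).
Variable k2 : nat.
Variable rk : V -> nat.        (* the fixed ordering of vertices *)
Variables (v : V) (c1 c2 : 'I_q).
(* the maximal coupling used for the pair of marginals at u given X and Y *)
Variable cpl : pcol V q -> pcol V q -> V -> {ffun 'I_q * 'I_q -> R}.

(* state of the process: (X, Y, V_1, V_col, E') ; V_2 = ~: V_1;
   E' is a set of hyperedge indices *)
Definition state := (pcol V q * pcol V q * {set V} * {set V} * {set 'I_m})%type.
Definition stX (s : state) : pcol V q := s.1.1.1.1.
Definition stY (s : state) : pcol V q := s.1.1.1.2.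
Definition stV1 (s : state) : {set V} := s.1.1.2.
Definition stVcol (s : state) : {set V} := s.1.2.
Definition stE (s : state) : {set 'I_m} := s.2.

Definition init_state : state :=
  ([ffun u => if u == v then Some c1 else None],
   [ffun u => if u == v then Some c2 else None],
   [set v], [set v], [set: 'I_m]).

Definition first_vertex (S : {set V}) : option V :=
  [pick x in S | [forall y in S, (rk x <= rk y)%N]].

Definition crossing (s : state) (i : 'I_m) : bool :=
  [&& i \in stE s, E i :&: stV1 s != set0 & E i :&: (~: stV1 s :\: stVcol s) != set0].

Definition first_edge (s : state) : option 'I_m :=
  [pick i | crossing s i && [forall j, crossing s j ==> (i <= j)%N]].

Definition expand_one (u : V) (Vcol : {set V}) (acc : {set V} * {set 'I_m}) (i : 'I_m) :=
  let: (V1, Ep) := acc in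
  if [&& i \in Ep, u \in E i, E i :&: V1 != set0, E i :&: ~: V1 != set0
       & #|E i :&: Vcol| == k2]
  then (V1 :|: (E i :\: Vcol), Ep :\ i) else acc.

Definition update (s : state) (u : V) (cx cy : 'I_q) : state :=
  let X' := [ffun w => if w == u then Some cx else stX s w] in
  let Y' := [ffun w => if w == u then Some cy else stY s w] in
  let Vcol' := u |: stVcol s in
  let V1a := if cx != cy then u |: stV1 s else stV1 s in
  let Ep1 := stE s :\: [set i | [&& u \in E i, satisfies E P X' i & satisfies E P Y' i]] in
  let acc := foldl (expand_one u Vcol') (V1a, Ep1) (enum 'I_m) in
  (X', Y', acc.1, Vcol', acc.2).

Definition dirac (s : state) : {ffun state -> R} := [ffun t => (t == s)%:R].

(* one iteration of the while loop, as a transition kernel *)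
Definition step (s : state) : {ffun state -> R} :=
  match first_edge s with
  | None => dirac s
  | Some e =>
    match first_vertex (E e :&: (~: stV1 s :\: stVcol s)) with
    | None => dirac s
    | Some u =>
      [ffun t => \sum_ab cpl (stX s) (stY s) u ab * (t == update s u ab.1 ab.2)%:R]
    end
  end.

Fixpoint run (n : nat) : {ffun state -> R} :=
  match n with
  | 0 => dirac init_state
  | n.+1 => [ffun t => \sum_s run n s * step s t]
  end.

(* each iteration colours a new vertex, so the loop stops within #|V| iterations;
   final_dist is the law of the final state *)
Definition final_dist : {ffun state -> R} := run #|V|.

Definition outX : {ffun pcol V q -> R} :=
  [ffun X => \sum_(s | stX s == X) final_dist s].
Definition outY : {ffun pcol V q -> R} :=
  [ffun Y => \sum_(s | stY s == Y) final_dist s].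

End Process.

From Pilot Require Import Defs.
From mathcomp Require Import all_boot all_order all_algebra.
Set Implicit Arguments. Unset Strict Implicit. Unset Printing Implicit Defensive.
Import Order.TTheory GRing.Theory Num.Theory.
Local Open Scope ring_scope.

(* (1) is an invariant: u is coloured only when it lies in a hyperedge meeting
   V_1, and V_1 only grows.
   (2) Averaging mu_{C_X'}, X' = X with u coloured a, over a drawn from the
   marginal at u given X gives back mu_{C_X}. The X-side of each coupling is
   that marginal, so X |-> mu_{C_X} is a martingale of the process. Since
   mu_{C_1}( . | X) = mu_{C_X} whenever X(v) = c_1, the law of the final X mixes
   these measures into mu_{C_X0} = mu_{C_1}. *)

Lemma sumr_neq0_exists (R : nmodType) (I : finType) (F : I -> R) :
  \sum_i F i != 0 -> exists i, F i != 0.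
Proof.
move=> nz; apply/existsP; apply: contraR nz => /existsPn F0.
by rewrite big1 // => i _; apply/eqP; rewrite -[_ == _]negbK F0.
Qed.

Lemma boolr_neq0 (R : numDomainType) (b : bool) : (b%:R != 0 :> R) = b.
Proof. by rewrite pnatr_eq0 eqb0 negbK. Qed.

Lemma sum_indicator_mul (R : pzSemiRingType) (I : finType) (x : I) (g : I -> R) :
  \sum_i (i == x)%:R * g i = g x.
Proof.
by rewrite (bigD1 x) //= eqxx mul1r big1 ?addr0 // => i /negbTE ->; rewrite mul0r.
Qed.

Lemma sum_pushforward (R : pzSemiRingType) (I J : finType) (f : I -> J)
    (mu : I -> R) (F : J -> R) :
  \sum_j (\sum_(i | f i == j) mu i) * F j = \sum_i mu i * F (f i).
Proof.
under eq_bigr do rewrite mulr_suml.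
rewrite (exchange_big_dep predT) //=; apply: eq_bigr => i _.
by rewrite (big_pred1 (f i)) // => j /=; rewrite eq_sym.
Qed.

Section Colourings.
Variable R : realFieldType.
Variables (V : finType) (q m : nat) (E : 'I_m -> {set V}) (P : 'I_m -> {set 'I_q}).

Lemma consistentP (t : fcol V q) (X : pcol V q) :
  reflect (forall w c, X w = Some c -> t w = c) (consistent t X).
Proof.
apply: (iffP forallP) => [H w c Xw | H w].
  by move: (H w); rewrite Xw => /eqP.
by case Xw: (X w) => [c|] //; rewrite (H w c Xw).
Qed.

Definition pcol_set (X : pcol V q) (u : V) (a : 'I_q) : pcol V q :=
  [ffun w => if w == u then Some a else X w].

(* Non-emptiness rules out X u = Some b with b != a. *)
Lemma CX_pcol_set (X : pcol V q) u a :
  [set s in CX E P X | s u == a] != set0 ->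
  CX E P (pcol_set X u a) = [set s in CX E P X | s u == a].
Proof.
case/set0Pn => s0; rewrite !inE => /andP[/andP[_ /consistentP s0X] /eqP s0u].
apply/setP => t; rewrite !inE; case: (Defs.proper E P t) => //=.
apply/consistentP/andP => [tX'|[/consistentP tX /eqP tu] w c].
  split; last by rewrite (tX' u a) // ffunE eqxx.
  apply/consistentP => w c; case: (eqVneq w u) => [->|wu] Xw.
    by rewrite (tX' u a) ?ffunE ?eqxx // -s0u (s0X _ _ Xw).
  by apply: tX'; rewrite ffunE (negbTE wu).
by rewrite ffunE; case: eqP => [-> [<-] //|_]; exact: tX.
Qed.

Lemma cond_unif_Cvc (X : pcol V q) v c : X v = Some c ->
  cond_unif R (Cvc E P v c) X =1 unif R (CX E P X).
Proof.
move=> Xv sg; rewrite /cond_unif; congr unif; apply/setP => t; rewrite !inE.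
case: (boolP (consistent t X)) => [/consistentP tX|]; last by rewrite !andbF.
by rewrite (tX _ _ Xv) eqxx !andbT.
Qed.

Lemma marginalE (X : pcol V q) u a :
  marginal R E P X u a = #|[set s in CX E P X | s u == a]|%:R / #|CX E P X|%:R.
Proof.
rewrite ffunE (eq_bigr (fun _ => #|CX E P X|%:R^-1)); last first.
  by move=> s /andP[sX _]; rewrite /unif sX.
rewrite sumr_const mulr_natl; congr (_ *+ _).
by apply: eq_card => s; rewrite !inE unfold_in /= inE.
Qed.

Lemma sum_marginal (X : pcol V q) u : CX E P X != set0 ->
  \sum_a marginal R E P X u a = 1.
Proof.
move=> CXn0; under eq_bigr do rewrite ffunE.
rewrite -(partition_big (fun s : fcol V q => s u) predT) //=.
rewrite (eq_bigr (fun _ => #|CX E P X|%:R^-1)); last by move=> s sX; rewrite /unif sX.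
by rewrite sumr_const -[_ *+ _]mulr_natr mulVf // pnatr_eq0 cards_eq0.
Qed.

Lemma marginal_neq0_CX (X : pcol V q) u a : marginal R E P X u a != 0 ->
  CX E P (pcol_set X u a) != set0.
Proof.
rewrite marginalE; case: (eqVneq [set s in CX E P X | s u == a] set0) => [->|ne].
  by rewrite cards0 mul0r eqxx.
by rewrite CX_pcol_set.
Qed.

Lemma unif_CX_mixture (X : pcol V q) u (sg : fcol V q) :
  \sum_a marginal R E P X u a * unif R (CX E P (pcol_set X u a)) sg
  = unif R (CX E P X) sg.
Proof.
set S := CX E P X.
rewrite (eq_bigr (fun a => if (sg \in S) && (sg u == a) then #|S|%:R^-1 else 0)).
  rewrite -big_mkcond /= /unif; case: (boolP (sg \in S)) => sS /=.
    by rewrite (big_pred1 (sg u)) // => a; rewrite /= eq_sym.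
  by rewrite big_pred0.
move=> a _; rewrite marginalE.
case: (eqVneq [set s in S | s u == a] set0) => [Sa0|Sa].
  rewrite Sa0 cards0 !mul0r; case: (boolP (sg \in S)) => sS //=.
  by case: eqP => // sga; move/setP/(_ sg): Sa0; rewrite in_set in_set0 sS sga eqxx.
rewrite CX_pcol_set // /unif !inE; case: ifP => _; last by rewrite mulr0.
by rewrite mulrAC mulfV ?mul1r // pnatr_eq0 cards_eq0.
Qed.

Lemma Gamma_ver_subset (A B : {set V}) :
  A \subset B -> Gamma_ver E A \subset Gamma_ver E B.
Proof.
move=> AB; apply/subsetP => w; rewrite !inE => /existsP[x /andP[xA xw]].
by apply/existsP; exists x; rewrite (subsetP AB).
Qed.

Lemma Gamma_ver_edge (U : {set V}) i u : u \in E i -> E i :&: U != set0 ->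
  u \in Gamma_ver E U.
Proof.
move=> ui /set0Pn[w]; rewrite !inE => /andP[wi wU].
by apply/existsP; exists w; rewrite wU /adj_ver; apply/orP; right;
  apply/existsP; exists i; rewrite wi.
Qed.

Lemma preGibbs_mixture (C : {set fcol V q}) (mu : {ffun pcol V q -> R}) :
  (forall X, 0 <= mu X) -> \sum_X mu X = 1 ->
  (forall s, s \in C -> \sum_X mu X * cond_unif R C X s = unif R C s) ->
  preGibbs C mu.
Proof.
move=> mu_ge0 mu_mass mu_mix; split=> // s sC.
rewrite -mu_mix // (bigID (consistent s)) /= [X in _ + X]big1 ?addr0 // => X sX.
by rewrite /cond_unif /unif inE (negbTE sX) andbF mulr0.
Qed.

End Colourings.

Section Couplings.
Variables (R : realFieldType) (q : nat) (mu nu : {ffun 'I_q -> R}).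
Variable pi : {ffun 'I_q * 'I_q -> R}.
Hypothesis pi_cpl : is_coupling mu nu pi.

Lemma coupling_sum_l (F : 'I_q -> R) : \sum_ab pi ab * F ab.1 = \sum_a mu a * F a.
Proof.
case: pi_cpl => _ pi_l _.
transitivity (\sum_a \sum_b pi (a, b) * F a); first by rewrite pair_bigA; apply: eq_bigr => -[].
by apply: eq_bigr => a _; rewrite -mulr_suml pi_l.
Qed.

Lemma coupling_sum_r (F : 'I_q -> R) : \sum_ab pi ab * F ab.2 = \sum_b nu b * F b.
Proof.
case: pi_cpl => _ _ pi_r.
transitivity (\sum_a \sum_b pi (a, b) * F b); first by rewrite pair_bigA; apply: eq_bigr => -[].
by rewrite exchange_big; apply: eq_bigr => b _; rewrite -mulr_suml pi_r.
Qed.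

Lemma coupling_neq0 ab : pi ab != 0 -> mu ab.1 != 0 /\ nu ab.2 != 0.
Proof.
case: ab pi_cpl => a b [pi_ge0 pi_l pi_r] nz /=.
have pi_gt0 : 0 < pi (a, b) by rewrite lt0r nz pi_ge0.
split; rewrite gt_eqF //.
  by rewrite -pi_l (bigD1 b) //= (lt_le_trans pi_gt0) // lerDl sumr_ge0.
by rewrite -pi_r (bigD1 a) //= (lt_le_trans pi_gt0) // lerDl sumr_ge0.
Qed.

End Couplings.

Section Process.
Variable R : realFieldType.
Variables (V : finType) (q m : nat) (E : 'I_m -> {set V}) (P : 'I_m -> {set 'I_q}).
Variables (k2 : nat) (rk : V -> nat) (v : V) (c1 c2 : 'I_q).
Variable cpl : pcol V q -> pcol V q -> V -> {ffun 'I_q * 'I_q -> R}.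
Hypothesis cpl_max : forall (X Y : pcol V q) (u : V),
  CX E P X != set0 -> CX E P Y != set0 ->
  is_max_coupling (marginal R E P X u) (marginal R E P Y u) (cpl X Y u).
Hypothesis C1_neq0 : Cvc E P v c1 != set0.
Hypothesis C2_neq0 : Cvc E P v c2 != set0.

Local Notation state := (state V q m).
Local Notation step := (step E P k2 rk cpl).
Local Notation run := (run E P k2 rk v c1 c2 cpl).
Local Notation update := (update E P k2).
Local Notation init := (init_state m v c1 c2).

Definition process_inv (s : state) : Prop :=
  [/\ stX s v = Some c1 /\ stY s v = Some c2, v \in stV1 s,
      CX E P (stX s) != set0, CX E P (stY s) != set0
    & stVcol s \subset Gamma_ver E (stV1 s)].

Lemma CX_init c : CX E P [ffun u => if u == v then Some c else None] = Cvc E P v c.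
Proof.
apply/setP => t; rewrite !inE; congr (_ && _).
apply/consistentP/eqP => [tX|tv w c']; first by apply: tX; rewrite ffunE eqxx.
by rewrite ffunE; case: eqP => // -> [<-].
Qed.

Lemma process_inv_init : process_inv init.
Proof.
do !split; rewrite /stX /stY /stV1 /stVcol /= ?ffunE ?eqxx ?inE ?CX_init //.
by rewrite sub1set inE; apply/existsP; exists v; rewrite inE eqxx /adj_ver eqxx.
Qed.

Lemma expand_fold_subset u Vc (l : seq 'I_m) (acc : {set V} * {set 'I_m}) :
  acc.1 \subset (foldl (expand_one E k2 u Vc) acc l).1.
Proof.
elim: l acc => [|i l IHl] [V1 Ep] /=; first exact: subxx.
apply: subset_trans (IHl _); rewrite /expand_one; case: ifP => //= _.
exact: subsetUl.
Qed.

Lemma update_V1_subset s u a b : stV1 s \subset stV1 (update s u a b).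
Proof.
apply: subset_trans (expand_fold_subset _ _ _ _); rewrite /=.
by case: ifP => _; [exact: subsetUr | exact: subxx].
Qed.

Lemma update_inv s e u a b : process_inv s -> crossing E s e ->
  u \in E e :&: (~: stV1 s :\: stVcol s) ->
  marginal R E P (stX s) u a != 0 -> marginal R E P (stY s) u b != 0 ->
  process_inv (update s u a b).
Proof.
move=> [[Xv Yv] vV1 _ _ Vcol_sub] /and3P[_ eV1 _].
rewrite !inE => /and3P[ue _ uV1] Xa Yb.
have uv : u != v by apply: contraNneq uV1 => ->.
have V1_sub := update_V1_subset s u a b.
split; rewrite /stX /stY /stVcol /=.
- by rewrite !ffunE eq_sym (negbTE uv).
- exact: (subsetP V1_sub).
- exact: (marginal_neq0_CX Xa).
- exact: (marginal_neq0_CX Yb).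
apply: subset_trans (Gamma_ver_subset E V1_sub).
by rewrite subUset Vcol_sub sub1set (Gamma_ver_edge ue eV1).
Qed.

Lemma step_support s t : step s t != 0 ->
  t = s \/ exists e u ab, [/\ crossing E s e, u \in E e :&: (~: stV1 s :\: stVcol s),
    cpl (stX s) (stY s) u ab != 0 & t = update s u ab.1 ab.2].
Proof.
rewrite /step /first_edge; case: pickP => [e /andP[es _]|_];
  last by rewrite ffunE boolr_neq0 => /eqP; left.
rewrite /first_vertex; case: pickP => [u /andP[ue _]|_];
  last by rewrite ffunE boolr_neq0 => /eqP; left.
rewrite ffunE => /sumr_neq0_exists[ab]; rewrite mulf_eq0 negb_or => /andP[cpl_ab].
by rewrite boolr_neq0 => /eqP ->; right; exists e, u, ab.
Qed.

Lemma step_inv s t : process_inv s -> step s t != 0 -> process_inv t.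
Proof.
move=> Is /step_support[-> //|[e [u [ab [es ue cpl_ab ->]]]]].
have [_ _ CXn0 CYn0 _] := Is.
have [cp _] := cpl_max u CXn0 CYn0.
have [Xa Yb] := coupling_neq0 cp cpl_ab.
exact: update_inv Is es ue Xa Yb.
Qed.

Lemma run_inv n s : run n s != 0 -> process_inv s.
Proof.
elim: n s => [|n IHn] s /=; rewrite ffunE.
  by rewrite boolr_neq0 => /eqP ->; exact: process_inv_init.
case/sumr_neq0_exists => s'; rewrite mulf_eq0 negb_or => /andP[/IHn Is' step_s's].
exact: step_inv Is' step_s's.
Qed.

Lemma step_ge0 s t : process_inv s -> 0 <= step s t.
Proof.
move=> [_ _ CXn0 CYn0 _].
rewrite /step; case: first_edge => [e|]; [case: first_vertex => [u|]|];
  rewrite ffunE ?ler0n //.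
apply: sumr_ge0 => ab _; apply: mulr_ge0 => //.
by case: (cpl_max u CXn0 CYn0) => -[].
Qed.

Lemma run_ge0 n s : 0 <= run n s.
Proof.
elim: n s => [|n IHn] s /=; rewrite ffunE ?ler0n //.
apply: sumr_ge0 => s' _; have [->|/run_inv Is'] := eqVneq (run n s') 0.
  by rewrite mul0r.
by rewrite mulr_ge0 ?step_ge0.
Qed.

Definition harmonic (g : state -> R) : Prop :=
  forall s, process_inv s -> \sum_t step s t * g t = g s.

Lemma harmonicP (g : state -> R) :
  (forall s u, process_inv s ->
     \sum_ab cpl (stX s) (stY s) u ab * g (update s u ab.1 ab.2) = g s) ->
  harmonic g.
Proof.
move=> g_update s Is; rewrite /step.
case: first_edge => [e|]; [case: first_vertex => [u|]|];
  under eq_bigr do rewrite ffunE; rewrite ?sum_indicator_mul //.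
rewrite -(g_update s u Is); under eq_bigr do rewrite mulr_suml.
rewrite exchange_big; apply: eq_bigr => ab _.
by under eq_bigr do rewrite -mulrA; rewrite -mulr_sumr sum_indicator_mul.
Qed.

Lemma run_harmonic n (g : state -> R) : harmonic g ->
  \sum_s run n s * g s = g init.
Proof.
move=> g_harm; elim: n => [|n IHn] /=; under eq_bigr do rewrite ffunE.
  exact: sum_indicator_mul.
under eq_bigr do rewrite mulr_suml.
rewrite exchange_big /= -IHn; apply: eq_bigr => s _.
under eq_bigr do rewrite -mulrA; rewrite -mulr_sumr.
by have [->|/run_inv Is] := eqVneq (run n s) 0; rewrite ?mul0r ?g_harm.
Qed.

Lemma harmonic1 : harmonic (fun _ => 1).
Proof.
apply: harmonicP => s u [_ _ CXn0 CYn0 _].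
have [cp _] := cpl_max u CXn0 CYn0.
by rewrite (coupling_sum_l cp (fun _ => 1)); under eq_bigr do rewrite mulr1;
  exact: sum_marginal.
Qed.

Lemma harmonic_unifX sg : harmonic (fun t => unif R (CX E P (stX t)) sg).
Proof.
apply: harmonicP => s u [_ _ CXn0 CYn0 _].
have [cp _] := cpl_max u CXn0 CYn0.
by rewrite (coupling_sum_l cp (fun a => unif R (CX E P (pcol_set (stX s) u a)) sg))
  unif_CX_mixture.
Qed.

Lemma harmonic_unifY sg : harmonic (fun t => unif R (CX E P (stY t)) sg).
Proof.
apply: harmonicP => s u [_ _ CXn0 CYn0 _].
have [cp _] := cpl_max u CXn0 CYn0.
by rewrite (coupling_sum_r cp (fun b => unif R (CX E P (pcol_set (stY s) u b)) sg))
  unif_CX_mixture.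
Qed.

Lemma pushforward_preGibbs (f : state -> pcol V q) c :
  (forall s, process_inv s -> f s v = Some c) ->
  (forall sg, harmonic (fun t => unif R (CX E P (f t)) sg)) ->
  f init = [ffun u => if u == v then Some c else None] ->
  preGibbs (Cvc E P v c) [ffun X => \sum_(s | f s == X) final_dist E P k2 rk v c1 c2 cpl s].
Proof.
move=> f_pinned f_harm f_init; set mu := [ffun X => _]; apply: preGibbs_mixture.
- by move=> X; rewrite ffunE sumr_ge0 // => s _; exact: run_ge0.
- transitivity (\sum_X mu X * 1); first by under [RHS]eq_bigr do rewrite mulr1.
  under eq_bigr do rewrite ffunE; rewrite sum_pushforward.
  exact: run_harmonic harmonic1.
move=> sg _; under eq_bigr do rewrite ffunE; rewrite sum_pushforward.
transitivity (\sum_s run #|V| s * unif R (CX E P (f s)) sg).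
  apply: eq_bigr => s _; have [->|/run_inv Is] := eqVneq (run #|V| s) 0.
    by rewrite !mul0r.
  by rewrite (cond_unif_Cvc R E P (f_pinned s Is)).
by rewrite run_harmonic // f_init CX_init.
Qed.

End Process.

Theorem lemma3p1 (R : realFieldType) (V : finType) (q m : nat)
  (E : 'I_m -> {set V}) (P : 'I_m -> {set 'I_q}) (k k1 k2 : nat)
  (rk : V -> nat) (v : V) (c1 c2 : 'I_q)
  (cpl : pcol V q -> pcol V q -> V -> {ffun 'I_q * 'I_q -> R}) :
  injective E -> injective rk ->
  (0 < k2)%N -> (k2 < k1)%N -> (k1 <= k)%N ->
  (forall i, (k1 <= #|E i| <= k)%N) ->
  c1 != c2 ->
  Cvc E P v c1 != set0 -> Cvc E P v c2 != set0 ->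
  (forall (X Y : pcol V q) (u : V), CX E P X != set0 -> CX E P Y != set0 ->
     is_max_coupling (marginal R E P X u) (marginal R E P Y u) (cpl X Y u)) ->
  (forall s : state V q m,
     final_dist E P k2 rk v c1 c2 cpl s != 0 ->
     stVcol s \subset Gamma_ver E (stV1 s))
  /\ preGibbs (Cvc E P v c1) (outX E P k2 rk v c1 c2 cpl)
  /\ preGibbs (Cvc E P v c2) (outY E P k2 rk v c1 c2 cpl).
Proof.
move=> _ _ _ _ _ _ _ C1_neq0 C2_neq0 cpl_max; split; [|split].
- by move=> s /(run_inv cpl_max C1_neq0 C2_neq0)[].
- apply: (pushforward_preGibbs cpl_max C1_neq0 C2_neq0 (f := @stX V q m)).
  + by move=> s [[]].
  + exact: harmonic_unifX.
  + by [].
- apply: (pushforward_preGibbs cpl_max C1_neq0 C2_neq0 (f := @stY V q m)).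
  + by move=> s [[]].
  + exact: harmonic_unifY.
  + by [].
Qed.
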